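(* Let $L\subseteq G_3$ be the subgroup of elements that fix every edge sticker and send every corner cubelet back to its own position, and let $K=\ker\phi\subseteq G_2$. Then $\psi$ restricts to an isomorphism $L\to K$.
   Context: The $3\times3\times3$ Rubik's cube consists of 8 corner cubelets (3 stickers each), 12 edge cubelets (2 stickers each) and 6 face-center cubelets. $G_3$ is the group of permutations of the 48 corner and edge stickers generated by the six moves $u_3,d_3,f_3,b_3,l_3,r_3$ rotating respectively the top, bottom, front, back, left, right layer of nine cubelets by $90^\circ$ clockwise as seen from outside facing that face. $G_2$ is the analogous group for the $2\times2\times2$ cube (8 corner cubelets, 24 stickers) with generators $u_2,\dots,r_2$; $\psi:G_3\to G_2$ is the homomorphism with $u_3\mapsto u_2$, $d_3\mapsto d_2$, etc. (recording the action on corner stickers), and $\phi:G_2\to S_8$ records the permutation of the 8 corner positions. *)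

From HB Require Import structures.
From mathcomp Require Import all_boot all_order all_algebra all_fingroup.
Set Implicit Arguments. Unset Strict Implicit. Unset Printing Implicit Defensive.
Import Order.TTheory GRing.Theory Num.Theory.
Local Open Scope ring_scope.

(* Coordinates: x = right(+)/left(-), y = up(+)/down(-), z = front(+)/back(-)
   (a right-handed frame).  A coordinate in {-1,0,1} is encoded by i : 'I_3
   with value i - 1. *)
Definition c2z (i : 'I_3) : int := (i : nat)%:Z - 1.
Definition z2c (z : int) : 'I_3 :=
  if z == -1 then @Ordinal 3 0 isT else if z == 0 then @Ordinal 3 1 isT
  else @Ordinal 3 2 isT.

Definition vec := ('I_3 * 'I_3 * 'I_3)%type.
Definition ivec := (int * int * int)%type.
Definition toZ (v : vec) : ivec := (c2z v.1.1, c2z v.1.2, c2z v.2).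
Definition ofZ (w : ivec) : vec := (z2c w.1.1, z2c w.1.2, z2c w.2).

Definition dotZ (a b : ivec) : int := a.1.1 * b.1.1 + a.1.2 * b.1.2 + a.2 * b.2.
Definition crossZ (a b : ivec) : ivec :=
  (a.1.2 * b.2 - a.2 * b.1.2, a.2 * b.1.1 - a.1.1 * b.2, a.1.1 * b.1.2 - a.1.2 * b.1.1).
(* Rotation by -90 degrees about the unit vector n, i.e. a quarter turn
   clockwise as seen from the tip of n (from outside the face with outward
   normal n):  v |-> (n.v) n - n x v. *)
Definition rotZ (n v : ivec) : ivec :=
  let k := dotZ n v in let c := crossZ n v in
  (k * n.1.1 - c.1.1, k * n.1.2 - c.1.2, k * n.2 - c.2).

Definition nzeros (p : ivec) : nat := ((p.1.1 == 0) + (p.1.2 == 0) + (p.2 == 0))%N.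

(* A sticker is a pair (p, d): cubelet position p and outward unit normal d
   of the face carrying the sticker; p . d = 1 means the sticker lies on the
   outer face with normal d.  Centers (two zero coordinates) are excluded. *)
Definition valid3 (x : vec * vec) : bool :=
  [&& dotZ (toZ x.2) (toZ x.2) == 1, dotZ (toZ x.1) (toZ x.2) == 1
    & (nzeros (toZ x.1) <= 1)%N].
Definition corner (x : vec * vec) : bool := nzeros (toZ x.1) == 0%N.
Definition valid2 (x : vec * vec) : bool := valid3 x && corner x.

Definition S3 := {x : vec * vec | valid3 x}.
Definition S2 := {x : vec * vec | valid2 x}.
HB.instance Definition _ := Finite.on S3.
HB.instance Definition _ := Finite.on S2.

Lemma valid2_3 x : valid2 x -> valid3 x. Proof. by case/andP. Qed.
Definition emb (s : S2) : S3 := exist _ (val s) (valid2_3 (valP s)).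

Definition turn (n : ivec) (x : vec * vec) : vec * vec :=
  if dotZ (toZ x.1) n == 1 then (ofZ (rotZ n (toZ x.1)), ofZ (rotZ n (toZ x.2)))
  else x.

Definition mv3 (n : ivec) (s : S3) : S3 := insubd s (turn n (val s)).
Definition mv2 (n : ivec) (s : S2) : S2 := insubd s (turn n (val s)).
(* (the functions are bijective, so insubd below returns the permutation) *)
Definition move3 (n : ivec) : {perm S3} := insubd (1%g : {perm S3}) [ffun s : S3 => mv3 n s].
Definition move2 (n : ivec) : {perm S2} := insubd (1%g : {perm S2}) [ffun s : S2 => mv2 n s].

Definition nU : ivec := (0, 1, 0).
Definition nD : ivec := (0, -1, 0).
Definition nF : ivec := (0, 0, 1).
Definition nB : ivec := (0, 0, -1).
Definition nL : ivec := (-1, 0, 0).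
Definition nR : ivec := (1, 0, 0).

Definition G3 : {set {perm S3}} :=
  <<[set move3 nU; move3 nD; move3 nF; move3 nB; move3 nL; move3 nR]>>%g.
Definition G2 : {set {perm S2}} :=
  <<[set move2 nU; move2 nD; move2 nF; move2 nB; move2 nL; move2 nR]>>%g.

Definition psi_fun (g : {perm S3}) (s : S2) : S2 := insubd s (val (g (emb s))).
Definition psi (g : {perm S3}) : {perm S2} := insubd (1%g : {perm S2}) [ffun s : S2 => psi_fun g s].

Definition CornerPos := {p : vec | nzeros (toZ p) == 0%N}.
HB.instance Definition _ := Finite.on CornerPos.
Definition pos2 (s : S2) : vec := (val s).1.
Definition pos3 (s : S3) : vec := (val s).1.
Definition phi_fun (h : {perm S2}) (c : CornerPos) : CornerPos :=
  if [pick s : S2 | pos2 s == val c] is Some s then insubd c (pos2 (h s)) else c.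
Definition phi (h : {perm S2}) : {perm CornerPos} := insubd (1%g : {perm CornerPos}) [ffun c : CornerPos => phi_fun h c].

Definition Lsub : {set {perm S3}} :=
  [set g in G3 | [forall s : S3, ~~ corner (val s) ==> (g s == s)]
              && [forall s : S3, corner (val s) ==> (pos3 (g s) == pos3 s)]].
Definition Kker : {set {perm S2}} := [set h in G2 | phi h == 1%g].

(* An element of L moves no edge sticker and keeps every corner cubelet in
   place, so it is determined by its action on corner stickers, that is, by its
   image under psi, and this image lies in ker phi.  For the converse, cycle the
   three stickers of each corner cubelet in one rotational sense and label each
   sticker in Z/3 by its distance in this cycle from the U/D sticker of its
   cubelet.  Face turns commute with the cycle and keep the sum of the labels of
   the images of the eight U/D stickers equal to 0; hence an element of ker phi
   is a pure twist with total twist 0 and is determined by its twists at seven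
   of the corners.  Seven explicit move sequences in L twist corner i < 7 one
   step forwards and the last corner one step back, so a product of their powers
   is mapped by psi to any given element of ker phi. *)

From mathcomp Require Import all_boot all_algebra all_fingroup.
Set Implicit Arguments. Unset Strict Implicit. Unset Printing Implicit Defensive.
Import GRing.Theory.

Lemma insubd_permE (T : finType) (f : T -> T) : injective f ->
  forall x, (insubd (1%g : {perm T}) [ffun x => f x] : {perm T}) x = f x.
Proof.
move=> f_inj x; have f_injb : injectiveb [ffun x => f x].
  by apply/injectiveP => a b; rewrite !ffunE; apply: f_inj.
by rewrite -pvalE insubdK // ffunE.
Qed.

Lemma group_set_pred (gT : finGroupType) (P : pred gT) :
  P 1%g -> (forall x y, P x -> P y -> P (x * y)%g) -> group_set [set x | P x].
Proof.
move=> P1 PM; apply/group_setP; split=> [|x y]; first by rewrite inE.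
by rewrite !inE; apply: PM.
Qed.

Lemma commute_iter (T : Type) (f h : T -> T) k x :
  (forall y, h (f y) = f (h y)) -> h (iter k f x) = iter k f (h x).
Proof. by move=> hf; elim: k => //= k <-. Qed.

Definition faces : seq ivec := [:: nU; nD; nF; nB; nL; nR].

Lemma face_setP (T : finType) (f : ivec -> T) x :
  reflect (exists2 n : ivec, n \in faces & x = f n)
          (x \in [set f nU; f nD; f nF; f nB; f nL; f nR]).
Proof.
apply: (iffP idP) => [|[n]].
  rewrite !inE -!orbA => /or4P [| | |/or3P [||]] /eqP ->;
  by eexists; last reflexivity; rewrite !inE eqxx ?orbT.
by rewrite !inE => /or4P [| | |/or3P [||]] /eqP -> ->; rewrite eqxx ?orbT.
Qed.

(* Spelled out because [enum 'I_3] is blocked by opaque proofs under [vm_compute]. *)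
Definition o0 : 'I_3 := @Ordinal 3 0 isT.
Definition o1 : 'I_3 := @Ordinal 3 1 isT.
Definition o2 : 'I_3 := @Ordinal 3 2 isT.
Definition ord3 : seq 'I_3 := [:: o0; o1; o2].

Lemma mem_ord3 (i : 'I_3) : i \in ord3.
Proof. by case: i => -[|[|[|//]]] lti; rewrite !inE -!val_eqE. Qed.

Definition vecs : seq vec :=
  [seq (ab, c) | ab <- [seq (a, b) | a <- ord3, b <- ord3], c <- ord3].

Lemma mem_vecs (p : vec) : p \in vecs.
Proof.
case: p => [[a b] c]; apply/allpairsP; exists ((a, b), c); rewrite mem_ord3.
by split=> //; apply/allpairsP; exists (a, b); rewrite !mem_ord3.
Qed.

Definition stickers3 : seq (vec * vec) :=
  [seq x <- [seq (p, d) | p <- vecs, d <- vecs] | valid3 x].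
Definition stickers2 : seq (vec * vec) := [seq x <- stickers3 | corner x].

Lemma mem_stickers3 x : valid3 x -> x \in stickers3.
Proof.
case: x => p d v3; rewrite mem_filter v3.
by apply/allpairsP; exists (p, d); rewrite !mem_vecs.
Qed.

Lemma mem_stickers2 x : valid2 x -> x \in stickers2.
Proof. by case/andP=> v3 cx; rewrite mem_filter cx mem_stickers3. Qed.

Lemma valid2_stickers2 x : x \in stickers2 -> valid2 x.
Proof. by rewrite !mem_filter => /and3P [cx v3 _]; apply/andP. Qed.

Lemma all_in2 (I J : eqType) (Q : I -> pred J) (r : seq I) (r' : seq J) :
  all (fun i => all (Q i) r') r -> {in r, forall i, {in r', forall j, Q i j}}.
Proof. by move=> /allP Qr i /Qr /allP. Qed.

Lemma in_stickers3 (I : eqType) (Q : I -> pred (vec * vec)) (r : seq I) :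
  all (fun i => all (Q i) stickers3) r -> {in r, forall i, {in valid3, forall x, Q i x}}.
Proof. by move=> /all_in2 Q3 i ri x /mem_stickers3; apply: Q3. Qed.

Lemma all_stickers2 (P : pred (vec * vec)) : all P stickers2 -> {in valid2, forall x, P x}.
Proof. by move=> /allP P2 x /mem_stickers2 /P2. Qed.

Lemma in_stickers2 (I : eqType) (Q : I -> pred (vec * vec)) (r : seq I) :
  all (fun i => all (Q i) stickers2) r -> {in r, forall i, {in valid2, forall x, Q i x}}.
Proof. by move=> /allP Qr i /Qr /all_stickers2. Qed.

(** * Orientation of corner stickers *)

Definition even_corner (p : vec) : bool :=
  ~~ odd ((p.1.1 == o0) + (p.1.2 == o0) + (p.2 == o0)).
Definition xnormal (p : vec) : vec := (p.1.1, o1, o1).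
Definition ynormal (p : vec) : vec := (o1, p.1.2, o1).
Definition znormal (p : vec) : vec := (o1, o1, p.2).

(* The three stickers of a corner cubelet are cycled x -> y -> z at corners
   with an even number of negative coordinates and x -> z -> y at the others:
   this is one and the same rotational sense at every corner, so the cycle
   commutes with the face turns. *)
Definition next_normal (p d : vec) : vec :=
  if d.1.1 != o1 then (if even_corner p then ynormal p else znormal p)
  else if d.1.2 != o1 then (if even_corner p then znormal p else xnormal p)
  else if even_corner p then xnormal p else ynormal p.
Definition next_sticker (x : vec * vec) : vec * vec := (x.1, next_normal x.1 x.2).

(* The number of steps of next_sticker from the U/D sticker of the cubelet. *)
Definition label (x : vec * vec) : 'Z_3 :=
  let: (p, d) := x in
  if d.1.2 != o1 then 0%R
  else if d.1.1 != o1 then (if even_corner p then 2%R else 1%R)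
  else if even_corner p then 1%R else 2%R.

Definition ud_stickers : seq (vec * vec) := [seq x <- stickers2 | label x == 0%R].

Definition s0 : S2 := exist _ ((o2, o2, o2), (o1, o2, o1)) isT.

Definition apply_word (w : seq ivec) (x : vec * vec) : vec * vec :=
  foldl (fun y n => turn n y) x w.

(* Word i < 7 turns corner cubelet i, numbered as in [ud_stickers], one step
   forwards and cubelet 7 one step back. *)
Definition twist_words : seq (seq ivec) := [::
  [:: nB; nB; nU; nR; nR; nR; nD; nD; nD; nR; nD; nR; nR; nR;
     nD; nD; nD; nR; nD; nU; nU; nU; nD; nD; nD; nR; nR; nR;
     nD; nR; nD; nD; nD; nR; nR; nR; nD; nR; nB; nB];
  [:: nR; nD; nR; nR; nR; nD; nD; nD; nR; nD; nU; nD; nD; nD;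
     nR; nR; nR; nD; nR; nD; nD; nD; nR; nR; nR; nD; nR; nU;
     nU; nU; nR; nR; nR; nD; nD; nD];
  [:: nU; nF; nU; nR; nR; nR; nD; nD; nD; nR; nD; nR; nR; nR;
     nD; nD; nD; nR; nD; nU; nU; nU; nD; nD; nD; nR; nR; nR;
     nD; nR; nD; nD; nD; nR; nR; nR; nD; nR; nF; nF; nF; nU;
     nU; nU];
  [:: nF; nR; nU; nR; nR; nR; nD; nD; nD; nR; nD; nR; nR; nR;
     nD; nD; nD; nR; nD; nU; nU; nU; nD; nD; nD; nR; nR; nR;
     nD; nR; nD; nD; nD; nR; nR; nR; nD; nF; nF; nF];
  [:: nB; nU; nR; nR; nR; nD; nD; nD; nR; nD; nR; nR; nR; nD;
     nD; nD; nR; nD; nU; nU; nU; nD; nD; nD; nR; nR; nR; nD;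
     nR; nD; nD; nD; nR; nR; nR; nD; nR; nB; nB; nB];
  [:: nD; nD; nD; nR; nD; nR; nR; nR; nD; nD; nD; nR; nD; nU;
     nD; nD; nD; nR; nR; nR; nD; nR; nD; nD; nD; nR; nR; nR;
     nD; nR; nU; nU; nU; nR; nR; nR];
  [:: nU; nR; nR; nR; nD; nD; nD; nR; nD; nR; nR; nR; nD; nD;
     nD; nR; nD; nU; nU; nU; nD; nD; nD; nR; nR; nR; nD; nR;
     nD; nD; nD; nR; nR; nR; nD; nR]
].

Definition twist_effect (i k : nat) : 'Z_3 :=
  if k == i then 1%R else if k == 7 then (-1)%R else 0%R.

Lemma valid3_turn : {in faces, forall n, {in valid3, forall x, valid3 (turn n x)}}.
Proof. by apply: in_stickers3; vm_compute. Qed.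

Lemma corner_turn :
  {in faces, forall n, {in valid3, forall x, corner (turn n x) == corner x}}.
Proof. by apply: in_stickers3; vm_compute. Qed.

Lemma turn_order4 : {in faces, forall n, {in valid3, forall x, iter 4 (turn n) x == x}}.
Proof. by apply: in_stickers3; vm_compute. Qed.

Lemma turn_next_sticker : {in faces, forall n, {in valid2, forall x,
  turn n (next_sticker x) == next_sticker (turn n x)}}.
Proof. by apply: in_stickers2; vm_compute. Qed.

Lemma sum_label_turn_ud :
  {in faces, forall n, (\sum_(x <- ud_stickers) label (turn n x) == 0)%R}.
Proof. by apply/allP; rewrite unlock; vm_compute. Qed.

Lemma valid2_next_sticker : {in valid2, forall x, valid2 (next_sticker x)}.
Proof. by apply: all_stickers2; vm_compute. Qed.

Lemma label_next_sticker :
  {in valid2, forall x, label (next_sticker x) == (label x + 1)%R}.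
Proof. by apply: all_stickers2; vm_compute. Qed.

Lemma next_sticker_order3 : {in valid2, forall x, iter 3 next_sticker x == x}.
Proof. by apply: all_stickers2; vm_compute. Qed.

Lemma same_cubelet_next_sticker : {in stickers2, forall x, {in valid2, forall y,
  (x.1 == y.1) ==> (y \in [:: x; next_sticker x; next_sticker (next_sticker x)])}}.
Proof. by apply: in_stickers2; vm_compute. Qed.

Lemma ud_stickers_uniq : uniq ud_stickers.
Proof. by vm_compute. Qed.

Lemma size_ud_stickers : size ud_stickers = 8.
Proof. by vm_compute. Qed.

Lemma corner_has_sticker :
  {in vecs, forall p, (nzeros (toZ p) == 0%N) ==> valid2 (p, xnormal p)}.
Proof. by apply/allP; vm_compute. Qed.

Lemma twist_words_faces : (size twist_words == 7) && all (all (mem faces)) twist_words.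
Proof. by vm_compute. Qed.

Lemma twist_words_L : {in twist_words, forall w, {in valid3, forall x,
  if corner x then (apply_word w x).1 == x.1 else apply_word w x == x}}.
Proof. by apply: in_stickers3; vm_compute. Qed.

Lemma twist_words_effect : {in iota 0 7, forall i, {in iota 0 8, forall k,
  label (apply_word (nth [::] twist_words i) (nth (val s0) ud_stickers k)) == twist_effect i k}}.
Proof. by apply: all_in2; vm_compute. Qed.

(** * Face turns and psi *)

Lemma val_mv3 n s : n \in faces -> val (mv3 n s) = turn n (val s).
Proof. by move=> n_face; rewrite /mv3 insubdK //; apply: valid3_turn (valP s). Qed.

Lemma val_move3 n s : n \in faces -> val (move3 n s) = turn n (val s).
Proof.
move=> n_face; rewrite /move3 insubd_permE ?val_mv3 //.
apply: (can_inj (g := iter 3 (mv3 n))) => s'; apply: val_inj.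
by rewrite /= !val_mv3 //; apply/eqP/(turn_order4 n_face (valP s')).
Qed.

Lemma valid2_turn n x : n \in faces -> valid2 x -> valid2 (turn n x).
Proof.
move=> n_face /andP [v3 cx].
by rewrite /valid2 valid3_turn // (eqP (corner_turn n_face v3)).
Qed.

Lemma val_mv2 n s : n \in faces -> val (mv2 n s) = turn n (val s).
Proof. by move=> n_face; rewrite /mv2 insubdK //; apply: valid2_turn (valP s). Qed.

Lemma val_move2 n s : n \in faces -> val (move2 n s) = turn n (val s).
Proof.
move=> n_face; rewrite /move2 insubd_permE ?val_mv2 //.
apply: (can_inj (g := iter 3 (mv2 n))) => s'; apply: val_inj.
by rewrite /= !val_mv2 //; apply/eqP/(turn_order4 n_face (valid2_3 (valP s'))).
Qed.

Definition corner_stab : {set {perm S3}} :=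
  [set g : {perm S3} | [forall s : S3, corner (val s) ==> corner (val (g s))]].

Fact corner_stab_group_set : group_set corner_stab.
Proof.
apply: group_set_pred => [|g h /forallP g_c /forallP h_c]; apply/forallP => s.
  by rewrite perm1 implybb.
by apply/implyP => /(implyP (g_c s)) /(implyP (h_c _)); rewrite permM.
Qed.
Canonical corner_stab_group := Group corner_stab_group_set.

Lemma val_psi_fun g s : g \in corner_stab -> val (psi_fun g s) = val (g (emb s)).
Proof.
rewrite inE => /forallP /(_ (emb s)) /implyP g_c; rewrite /psi_fun insubdK //.
by apply/andP; split; [apply: valP | apply: g_c; case/andP: (valP s)].
Qed.

Lemma val_psi g s : g \in corner_stab -> val (psi g s) = val (g (emb s)).
Proof.
move=> g_c; rewrite /psi insubd_permE ?val_psi_fun // => a b.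
by move/(congr1 val); rewrite !val_psi_fun // => /val_inj /perm_inj /(congr1 val) /= /val_inj.
Qed.

Lemma emb_psi g s : g \in corner_stab -> emb (psi g s) = g (emb s).
Proof. by move=> g_c; apply: val_inj; rewrite /= val_psi. Qed.

Lemma psiM_corner_stab : {in corner_stab &, {morph psi : g h / (g * h)%g}}.
Proof.
move=> g h g_c h_c; apply/permP => s; apply: val_inj.
by rewrite permM !val_psi ?groupM // permM -emb_psi.
Qed.

Definition psi_morph : {morphism corner_stab >-> {perm S2}} := Morphism psiM_corner_stab.

Lemma move3_corner_stab n : n \in faces -> move3 n \in corner_stab.
Proof.
move=> n_face; rewrite inE; apply/forallP => s; apply/implyP.
by rewrite val_move3 // (eqP (corner_turn n_face (valP s))).
Qed.

Lemma psi_move3 n : n \in faces -> psi (move3 n) = move2 n.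
Proof.
move=> n_face; apply/permP => s; apply: val_inj.
by rewrite val_psi ?move3_corner_stab // val_move3 // val_move2.
Qed.

Lemma G3_sub_corner_stab : G3 \subset corner_stab.
Proof.
by rewrite gen_subG; apply/subsetP => _ /face_setP [n n_face ->]; apply: move3_corner_stab.
Qed.

Lemma psi_G3 g : g \in G3 -> psi g \in G2.
Proof.
move=> g3; have gens_c : [set move3 nU; move3 nD; move3 nF; move3 nB; move3 nL; move3 nR]
    \subset corner_stab by rewrite -gen_subG G3_sub_corner_stab.
have : psi_morph g \in (psi_morph @* G3)%g by rewrite mem_morphim // (subsetP G3_sub_corner_stab).
rewrite /G3 morphim_gen //; apply: (subsetP (genS _)).
apply/subsetP => _ /morphimP [_ _ /face_setP [n n_face ->] ->].
by apply/face_setP; exists n; rewrite //= psi_move3.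
Qed.

(** * Twists of the 2x2x2 cube *)

Definition next (s : S2) : S2 := insubd s (next_sticker (val s)).
Definition lab (s : S2) : 'Z_3 := label (val s).

Lemma val_next s : val (next s) = next_sticker (val s).
Proof. by rewrite insubdK //; apply: valid2_next_sticker (valP s). Qed.

Lemma val_iter_next k s : val (iter k next s) = iter k next_sticker (val s).
Proof. by elim: k => //= k <-; rewrite val_next. Qed.

Lemma lab_next s : lab (next s) = (lab s + 1)%R.
Proof. by rewrite /lab val_next; apply/eqP/label_next_sticker/valP. Qed.

Lemma lab_iter_next k s : lab (iter k next s) = (lab s + k%:R)%R.
Proof. by elim: k => [|k IH]; rewrite ?addr0 //= lab_next IH -natr1 addrA. Qed.

Lemma pos_iter_next k s : pos2 (iter k next s) = pos2 s.
Proof. by rewrite /pos2 val_iter_next; elim: k => //= k ->. Qed.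

Lemma iter_next_mod3 k s : iter k next s = iter (k %% 3) next s.
Proof.
have next3 t : iter 3 next t = t.
  by apply: val_inj; rewrite val_iter_next; apply/eqP/next_sticker_order3/valP.
have periodic m t : iter (m * 3) next t = t.
  by elim: m => // m IH; rewrite mulSn iterD IH next3.
by rewrite {1}(divn_eq k 3) addnC iterD periodic.
Qed.

Lemma iter_next_fixed k s : lab (iter k next s) = lab s -> iter k next s = s.
Proof.
rewrite lab_iter_next -[X in _ = X]addr0 => /addrI; rewrite Zp_nat => /(congr1 val) /= k0.
by rewrite iter_next_mod3 -[k %% 3]/(k %% (Zp_trunc 3).+2) k0.
Qed.

Lemma same_pos_iter_next s t : pos2 s = pos2 t -> exists k, t = iter k next s.
Proof.
move=> st; have := same_cubelet_next_sticker (mem_stickers2 (valP s)) (valP t).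
rewrite -[_.1]/(pos2 s) -[_.1]/(pos2 t) st eqxx !inE.
by case/or3P => /eqP ts; [exists 0 | exists 1 | exists 2]; apply: val_inj; rewrite val_iter_next.
Qed.

Lemma pos_lab_inj s t : pos2 s = pos2 t -> lab s = lab t -> s = t.
Proof.
by move=> /same_pos_iter_next [k ->] /esym /iter_next_fixed.
Qed.

(* 2 * lab s = - lab s (mod 3) steps lead back to the label-0 sticker. *)
Definition ref (s : S2) : S2 := iter (2 * lab s) next s.

Lemma lab_ref s : lab (ref s) = 0%R.
Proof. by rewrite lab_iter_next; case: (lab s) => -[|[|[|//]]] lt3; apply/eqP. Qed.

Lemma pos_ref s : pos2 (ref s) = pos2 s.
Proof. exact: pos_iter_next. Qed.

Lemma iter_lab_ref s : iter (lab s) next (ref s) = s.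
Proof. by rewrite -iterD iter_next_mod3 -mulSn modnMr. Qed.

Definition commutes_next (h : {perm S2}) : bool := [forall s, h (next s) == next (h s)].

Lemma commutes_nextP (h : {perm S2}) :
  reflect (forall s, h (next s) = next (h s)) (commutes_next h).
Proof. exact: eqfunP. Qed.

Lemma lab_perm_ref (h : {perm S2}) t :
  commutes_next h -> lab (h t) = (lab (h (ref t)) + lab t)%R.
Proof.
move=> /commutes_nextP hC; rewrite -{1}(iter_lab_ref t) (commute_iter _ _ hC).
by rewrite lab_iter_next natr_Zp.
Qed.

Definition refs : {set S2} := [set s | lab s == 0%R].

Lemma ref_perm_inj (g : {perm S2}) : commutes_next g -> {in refs &, injective (ref \o g)}.
Proof.
move=> /commutes_nextP gC s1 s2; rewrite !inE => /eqP l1 /eqP l2 /= eq_ref.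
have [k gs1] : exists k, g s1 = iter k next (g s2).
  by apply: same_pos_iter_next; rewrite -pos_ref -eq_ref pos_ref.
move: gs1; rewrite -(commute_iter _ _ gC) => /perm_inj s1E.
by rewrite s1E iter_next_fixed // -s1E l1 l2.
Qed.

Lemma ref_perm_refs (g : {perm S2}) : commutes_next g -> (ref \o g) @: refs = refs.
Proof.
move=> gC; apply/eqP; rewrite eqEcard card_in_imset; last exact: ref_perm_inj.
by rewrite leqnn andbT; apply/subsetP => _ /imsetP [s _ ->]; rewrite inE lab_ref.
Qed.

Definition total_twist (h : {perm S2}) : 'Z_3 := (\sum_(s in refs) lab (h s))%R.

Lemma total_twistM g h : commutes_next g -> commutes_next h ->
  total_twist (g * h)%g = (total_twist g + total_twist h)%R.
Proof.
move=> gC hC; rewrite /total_twist.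
under eq_bigr => s _ do rewrite permM (lab_perm_ref _ hC).
rewrite big_split /= addrC; congr (_ + _)%R.
by rewrite -[in RHS](ref_perm_refs gC) big_imset //; apply: ref_perm_inj.
Qed.

Definition balanced : {set {perm S2}} :=
  [set h | commutes_next h && (total_twist h == 0%R)].

Fact balanced_group_set : group_set balanced.
Proof.
apply: group_set_pred => [|g h /andP [gC /eqP g0] /andP [hC /eqP h0]].
  rewrite /total_twist big1 ?eqxx ?andbT => [|s]; last by rewrite inE perm1 => /eqP.
  by apply/commutes_nextP => s; rewrite !perm1.
rewrite total_twistM // g0 h0 addr0 eqxx andbT.
by apply/commutes_nextP => s; rewrite !permM (commutes_nextP _ gC) (commutes_nextP _ hC).
Qed.
Canonical balanced_group := Group balanced_group_set.

Lemma sum_refs (F : vec * vec -> 'Z_3) :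
  (\sum_(s in refs) F (val s))%R = (\sum_(x <- ud_stickers) F x)%R.
Proof.
rewrite -big_enum -(big_map val xpredT); apply/perm_big/uniq_perm => [||x].
- by rewrite map_inj_uniq ?enum_uniq //; apply: val_inj.
- exact: ud_stickers_uniq.
apply/mapP/idP => [[s] | x_ud].
  by rewrite mem_enum inE mem_filter => l0 ->; rewrite l0 mem_stickers2 // (valP s).
move: x_ud; rewrite mem_filter => /andP [l0 x_st].
by exists (Sub x (valid2_stickers2 x_st)); rewrite // mem_enum inE.
Qed.

Lemma move2_balanced n : n \in faces -> move2 n \in balanced.
Proof.
move=> n_face; rewrite inE; apply/andP; split.
  apply/commutes_nextP => s; apply: val_inj; rewrite val_next !val_move2 // val_next.
  exact/eqP/(turn_next_sticker n_face (valP s)).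
rewrite /total_twist; under eq_bigr => s _ do rewrite /lab val_move2 //.
by rewrite (sum_refs (fun x => label (turn n x))) sum_label_turn_ud.
Qed.

Lemma G2_sub_balanced : G2 \subset balanced.
Proof.
by rewrite gen_subG; apply/subsetP => _ /face_setP [n n_face ->]; apply: move2_balanced.
Qed.

Definition pure_twists : {set {perm S2}} :=
  [set h | commutes_next h && [forall s, pos2 (h s) == pos2 s]].

Lemma pure_twistsP (h : {perm S2}) : reflect
  ((forall s, h (next s) = next (h s)) /\ forall s, pos2 (h s) = pos2 s) (h \in pure_twists).
Proof. by rewrite inE; apply: (iffP andP) => -[hC hP]; split; apply/eqfunP. Qed.

Fact pure_twists_group_set : group_set pure_twists.
Proof.
apply/group_setP; split=> [|g h]; first by apply/pure_twistsP; split=> s; rewrite !perm1.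
move=> /pure_twistsP [gC gP] /pure_twistsP [hC hP]; apply/pure_twistsP.
by split=> s; rewrite !permM ?gC ?hC // hP gP.
Qed.
Canonical pure_twists_group := Group pure_twists_group_set.

Lemma pure_twist_ref h s : h \in pure_twists -> lab s = 0%R ->
  h s = iter (lab (h s)) next s.
Proof.
move=> /pure_twistsP [_ hP] s_ref; rewrite -{1}(iter_lab_ref (h s)); congr iter.
by apply: pos_lab_inj; rewrite ?pos_ref ?hP // lab_ref s_ref.
Qed.

Lemma lab_pure_twistM g h s : g \in pure_twists -> h \in pure_twists -> lab s = 0%R ->
  lab ((g * h)%g s) = (lab (g s) + lab (h s))%R.
Proof.
move=> g_pure /pure_twistsP [hC _] s_ref; rewrite permM {1}(pure_twist_ref g_pure s_ref).
by rewrite (commute_iter _ _ hC) lab_iter_next natr_Zp addrC.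
Qed.

Lemma lab_pure_twist_prod (I : Type) (r : seq I) (a : I -> {perm S2}) (e : I -> nat) s :
  (forall i, a i \in pure_twists) -> lab s = 0%R ->
  lab ((\prod_(i <- r) a i ^+ e i)%g s) = (\sum_(i <- r) (e i)%:R * lab (a i s))%R.
Proof.
move=> a_pure s_ref; have lab_X i : lab ((a i ^+ e i)%g s) = ((e i)%:R * lab (a i s))%R.
  elim: (e i) => [|k IH]; first by rewrite expg0 perm1 s_ref mul0r.
  by rewrite expgSr lab_pure_twistM ?groupX ?a_pure // IH -natr1 mulrDl mul1r.
elim: r => [|i r IH]; first by rewrite !big_nil perm1.
have prod_pure : (\prod_(j <- r) a j ^+ e j)%g \in pure_twists.
  by apply: group_prod => j _; rewrite groupX ?a_pure.
by rewrite !big_cons lab_pure_twistM ?groupX ?a_pure // IH lab_X.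
Qed.

Lemma pure_twist_eq h h' : h \in pure_twists -> h' \in pure_twists ->
  (forall s, lab s = 0%R -> lab (h s) = lab (h' s)) -> h = h'.
Proof.
move=> h_pure h'_pure eq_lab; have /pure_twistsP [hC _] := h_pure.
have /pure_twistsP [h'C _] := h'_pure.
apply/permP => t; rewrite -(iter_lab_ref t) (commute_iter _ _ hC) (commute_iter _ _ h'C).
rewrite (pure_twist_ref h_pure (lab_ref t)) (pure_twist_ref h'_pure (lab_ref t)).
by rewrite (eq_lab _ (lab_ref t)).
Qed.

Definition ud (k : nat) : S2 := insubd s0 (nth (val s0) ud_stickers k).

Lemma nth_ud_stickers k : k < 8 ->
  valid2 (nth (val s0) ud_stickers k) /\ label (nth (val s0) ud_stickers k) = 0%R.
Proof.
move=> k8; have : nth (val s0) ud_stickers k \in ud_stickers by rewrite mem_nth ?size_ud_stickers.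
by rewrite mem_filter => /andP [/eqP l0 /valid2_stickers2].
Qed.

Lemma val_ud k : k < 8 -> val (ud k) = nth (val s0) ud_stickers k.
Proof. by move=> k8; rewrite insubdK //; case: (nth_ud_stickers k8). Qed.

Lemma lab_ud k : k < 8 -> lab (ud k) = 0%R.
Proof. by move=> k8; rewrite /lab val_ud //; case: (nth_ud_stickers k8). Qed.

Lemma ref_udP s : lab s = 0%R -> exists2 k, k < 8 & s = ud k.
Proof.
move=> s_ref; have s_ud : val s \in ud_stickers.
  by rewrite mem_filter; apply/andP; split; [apply/eqP | apply: mem_stickers2 (valP s)].
exists (index (val s) ud_stickers); first by rewrite -size_ud_stickers index_mem.
by apply: val_inj; rewrite val_ud ?nth_index // -size_ud_stickers index_mem.
Qed.

Lemma total_twist_ud h : total_twist h = (\sum_(k < 8) lab (h (ud k)))%R.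
Proof.
rewrite /total_twist (eq_bigr (fun s => lab (h (insubd s0 (val s))))) => [|s _]; last first.
  by rewrite valKd.
rewrite (sum_refs (fun x => lab (h (insubd s0 x)))) (big_nth (val s0)) size_ud_stickers.
by rewrite big_mkord.
Qed.

Lemma pure_twist_eq_ud h h' : h \in pure_twists -> h' \in pure_twists ->
  total_twist h = total_twist h' -> (forall j, j < 7 -> lab (h (ud j)) = lab (h' (ud j))) ->
  h = h'.
Proof.
move=> h_pure h'_pure eq_total eq7; apply: pure_twist_eq => // s /ref_udP [k k8 ->].
have eq_last : lab (h (ud 7)) = lab (h' (ud 7)).
  move: eq_total; rewrite !total_twist_ud !(big_ord_recr 7) /=.
  by rewrite (eq_bigr _ (fun (i : 'I_7) _ => eq7 i (ltn_ord i))) => /addrI.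
by case: (ltngtP k 7) => [/eq7 | | ->] //; rewrite ltnNge -ltnS k8.
Qed.

(** * phi and the subgroup L *)

Lemma corner_pos2 s : nzeros (toZ (pos2 s)) == 0%N.
Proof. by case/andP: (valP s). Qed.

Lemma corner_pos_sticker (c : CornerPos) : exists s : S2, pos2 s = val c.
Proof.
have /implyP/(_ (valP c)) c2 := corner_has_sticker (mem_vecs (val c)).
by exists (Sub (val c, xnormal (val c)) c2).
Qed.

Lemma val_phi_fun h c s : commutes_next h -> pos2 s = val c -> val (phi_fun h c) = pos2 (h s).
Proof.
move=> /commutes_nextP hC sc; rewrite /phi_fun.
case: pickP => [s' /eqP s'c | /(_ s)]; last by rewrite sc eqxx.
have hs'_corner := corner_pos2 (h s'); rewrite insubdK //.
have [k ->] := same_pos_iter_next (etrans s'c (esym sc)).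
by rewrite (commute_iter _ _ hC) pos_iter_next.
Qed.

Lemma phi_fun_inj h : commutes_next h -> injective (phi_fun h).
Proof.
move=> hC c d; have [sc scE] := corner_pos_sticker c; have [sd sdE] := corner_pos_sticker d.
move/(congr1 val); rewrite (val_phi_fun hC scE) (val_phi_fun hC sdE).
case/same_pos_iter_next => k hsdE; apply: val_inj; rewrite -scE -sdE.
have -> : sd = iter k next sc.
  by apply: (@perm_inj _ h); rewrite hsdE (commute_iter _ _ (commutes_nextP _ hC)).
by rewrite pos_iter_next.
Qed.

Lemma phi1_fixes_pos h : commutes_next h -> phi h = 1%g -> forall s, pos2 (h s) = pos2 s.
Proof.
move=> hC h1 s; pose c : CornerPos := Sub (pos2 s) (corner_pos2 s).
have : phi h c = c by rewrite h1 perm1.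
rewrite /phi insubd_permE; last exact: phi_fun_inj.
by move/(congr1 val); rewrite (val_phi_fun (s := s) hC).
Qed.

Lemma phi_fixed_pos (h : {perm S2}) : (forall s, pos2 (h s) = pos2 s) -> phi h = 1%g.
Proof.
move=> hP; have phi_fun_id c : phi_fun h c = c.
  by rewrite /phi_fun; case: pickP => [s /eqP sc|//]; rewrite hP sc valKd.
apply/permP => c; rewrite perm1 /phi insubd_permE ?phi_fun_id // => c1 c2.
by rewrite !phi_fun_id.
Qed.

Definition cubelet_fixing : {set {perm S3}} :=
  [set g : {perm S3} | [forall s, ~~ corner (val s) ==> (g s == s)]
                    && [forall s, corner (val s) ==> (pos3 (g s) == pos3 s)]].

Fact cubelet_fixing_group_set : group_set cubelet_fixing.
Proof.
apply: group_set_pred => [|g h /andP [/forallP g_e /forallP g_c] /andP [/forallP h_e /forallP h_c]].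
  by apply/andP; split; apply/forallP => s; rewrite perm1 eqxx implybT.
apply/andP; split; apply/forallP => s; rewrite permM; apply/implyP => s_c.
  by rewrite (eqP (implyP (g_e s) s_c)) (implyP (h_e s) s_c).
have gs_pos := eqP (implyP (g_c s) s_c).
have gs_c : corner (val (g s)) by rewrite /corner -/(pos3 (g s)) gs_pos.
by rewrite (eqP (implyP (h_c _) gs_c)) gs_pos.
Qed.
Canonical cubelet_fixing_group := Group cubelet_fixing_group_set.

Lemma LsubE g : (g \in Lsub) = (g \in G3) && (g \in cubelet_fixing).
Proof. by rewrite !inE. Qed.

Lemma psi_inj_L : {in Lsub &, injective psi}.
Proof.
move=> x y; rewrite !LsubE !inE => /and3P [x3 /forallP x_e _] /and3P [y3 /forallP y_e _] xy.
apply/permP => s; have [s_c | s_e] := boolP (corner (val s)).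
  have s2 : valid2 (val s) by apply/andP; split; [apply: valP |].
  have <- : emb (Sub (val s) s2) = s by apply: val_inj.
  by rewrite -!emb_psi ?(subsetP G3_sub_corner_stab) // xy.
by rewrite (eqP (implyP (x_e s) s_e)) (eqP (implyP (y_e s) s_e)).
Qed.

Lemma psi_L_sub_K : psi @: Lsub \subset Kker.
Proof.
apply/subsetP => _ /imsetP [g g_L ->].
move: g_L; rewrite LsubE inE => /andP [g3 /andP [_ /forallP g_c]].
rewrite inE psi_G3 //=; apply/eqP/phi_fixed_pos => s.
rewrite /pos2 val_psi ?(subsetP G3_sub_corner_stab) //; apply/eqP.
by apply: (implyP (g_c (emb s))); case/andP: (valP s).
Qed.

Lemma Kker_pure h : h \in Kker -> h \in pure_twists /\ total_twist h = 0%R.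
Proof.
rewrite inE => /andP [/(subsetP G2_sub_balanced) h_bal /eqP h1].
move: h_bal; rewrite inE => /andP [hC /eqP h0]; split=> //.
by rewrite inE hC; apply/forallP => s; apply/eqP/phi1_fixes_pos.
Qed.

Definition word3 (w : seq ivec) : {perm S3} := (\prod_(n <- w) move3 n)%g.

Lemma val_word3 w s : all (mem faces) w -> val (word3 w s) = apply_word w (val s).
Proof.
rewrite /word3; elim: w s => [|n w IH] s /=; first by rewrite big_nil perm1.
by case/andP=> n_face w_faces; rewrite big_cons permM IH // val_move3.
Qed.

Lemma word3_G3 w : all (mem faces) w -> word3 w \in G3.
Proof.
move=> /allP w_faces; rewrite /word3 big_seq; apply: group_prod => n /w_faces n_face.
by apply: mem_gen; apply/face_setP; exists n.
Qed.

Definition twist (i : nat) : {perm S3} := word3 (nth [::] twist_words i).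

Lemma twist_faces i : i < 7 -> all (mem faces) (nth [::] twist_words i).
Proof.
case/andP: twist_words_faces => /eqP size7 /allP tw_faces i7.
by apply/tw_faces/mem_nth; rewrite size7.
Qed.

Lemma twist_G3 i : i < 7 -> twist i \in G3.
Proof. by move=> i7; apply/word3_G3/twist_faces. Qed.

Lemma twist_L i : i < 7 -> twist i \in Lsub.
Proof.
move=> i7; have tw_i : nth [::] twist_words i \in twist_words.
  by apply: mem_nth; case/andP: twist_words_faces => /eqP ->.
rewrite LsubE twist_G3 // inE /=.
apply/andP; split; apply/forallP => s; apply/implyP => s_c;
  have := twist_words_L tw_i (valP s); rewrite -val_word3 ?twist_faces //.
- by rewrite (negbTE s_c) => /eqP /val_inj ->.
- by rewrite s_c.
Qed.

Lemma lab_psi_twist i k : i < 7 -> k < 8 -> lab (psi (twist i) (ud k)) = twist_effect i k.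
Proof.
move=> i7 k8; rewrite /lab val_psi; last exact: (subsetP G3_sub_corner_stab _ (twist_G3 i7)).
rewrite val_word3 ?twist_faces // [val (emb _)]/= val_ud //; apply/eqP.
by apply: twist_words_effect; rewrite mem_iota.
Qed.

Definition twist_prod (e : nat -> nat) : {perm S3} := (\prod_(i < 7) twist i ^+ e i)%g.

Lemma twist_prod_L e : twist_prod e \in Lsub.
Proof.
rewrite LsubE; apply/andP; split; apply: group_prod => i _; apply: groupX.
  exact: twist_G3.
by move: (twist_L (ltn_ord i)); rewrite LsubE => /andP [].
Qed.

Lemma psi_twist_prod e : psi (twist_prod e) = (\prod_(i < 7) psi (twist i) ^+ e i)%g.
Proof.
have tw_c (i : 'I_7) : twist i \in corner_stab.
  exact: subsetP G3_sub_corner_stab _ (twist_G3 (ltn_ord i)).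
transitivity (\prod_(i < 7) psi_morph (twist i ^+ e i))%g.
  by rewrite -(morph_prod psi_morph) // => i _; apply: groupX; apply: tw_c.
by apply: eq_bigr => i _; apply: morphX; apply: tw_c.
Qed.

Lemma lab_psi_twist_prod e j : j < 7 -> lab (psi (twist_prod e) (ud j)) = (e j)%:R%R.
Proof.
move=> j7; have tw_pure (i : 'I_7) : psi (twist i) \in pure_twists.
  exact: (Kker_pure (subsetP psi_L_sub_K _ (imset_f psi (twist_L (ltn_ord i))))).1.
rewrite psi_twist_prod (lab_pure_twist_prod _ _ tw_pure (lab_ud (ltnW j7))).
under eq_bigr => i _ do rewrite (lab_psi_twist (ltn_ord i) (ltnW j7)).
rewrite (bigD1 (Ordinal j7)) //= big1 => [|i ij].
  by rewrite /twist_effect eqxx mulr1 addr0.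
have ji : (j == i) = false.
  by apply: contraNF ij => /eqP ji; apply/eqP/val_inj; rewrite /= ji.
by rewrite /twist_effect ji ltn_eqF //= mulr0.
Qed.

Lemma Kker_sub_psi_L : Kker \subset psi @: Lsub.
Proof.
apply/subsetP => h h_K; have [h_pure h0] := Kker_pure h_K.
pose e j := nat_of_ord (lab (h (ud j))).
apply/imsetP; exists (twist_prod e); first exact: twist_prod_L.
have [g_pure g0] := Kker_pure (subsetP psi_L_sub_K _ (imset_f psi (twist_prod_L e))).
apply/esym/pure_twist_eq_ud; rewrite ?g0 ?h0 // => j j7.
by rewrite lab_psi_twist_prod // natr_Zp.
Qed.

Theorem proposition3p8 :
  [/\ {in Lsub &, {morph psi : x y / (x * y)%g}},
      {in Lsub &, injective psi}
    & psi @: Lsub = Kker].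
Proof.
have L_c g : g \in Lsub -> g \in corner_stab.
  by rewrite LsubE => /andP [/(subsetP G3_sub_corner_stab)].
split; first by move=> x y /L_c x_c /L_c y_c; apply: psiM_corner_stab.
  exact: psi_inj_L.
by apply/eqP; rewrite eqEsubset psi_L_sub_K Kker_sub_psi_L.
Qed.
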